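(* Let $S$ and $T$ be asynchronous automaton semigroups. Then the normal ideal extension of $S$ by $T$ is an asynchronous automaton semigroup.
   Context: An asynchronous automaton is $(Q,\Sigma,t,o)$ with $Q$ a finite set of states, $\Sigma$ a finite alphabet, $t:Q\times\Sigma\to Q$ and $o:Q\times\Sigma\to\Sigma^*$. Each state $q$ induces $q:\Sigma^*\to\Sigma^*$ by $q(\emptyset)=\emptyset$, $q(\sigma w)=o(q,\sigma)\,q'(w)$ with $q'=t(q,\sigma)$; an asynchronous automaton semigroup is (a semigroup isomorphic to) the semigroup of maps generated under composition by the states. For semigroups $S,T$, the normal ideal extension of $S$ by $T$ is the disjoint union $S\sqcup T$ with product $x\cdot y=xy$ if $x,y\in S$ or $x,y\in T$, $x\cdot y=y$ if $x\in S,y\in T$, and $x\cdot y=x$ if $x\in T,y\in S$. *)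

From mathcomp Require Import all_boot.
Set Implicit Arguments. Unset Strict Implicit. Unset Printing Implicit Defensive.

Record async_automaton := AsyncAutomaton {
  aa_Q : finType;
  aa_Sigma : finType;
  aa_t : aa_Q -> aa_Sigma -> aa_Q;
  aa_o : aa_Q -> aa_Sigma -> seq aa_Sigma
}.

Fixpoint state_map (M : async_automaton) (q : aa_Q M) (w : seq (aa_Sigma M))
  : seq (aa_Sigma M) :=
  match w with
  | [::] => [::]
  | s :: w' => aa_o q s ++ state_map (aa_t q s) w'
  end.

(* The semigroup of maps generated under composition by the state maps.
   Convention: the product f.g of two maps is "first f, then g",
   i.e. the map w |-> g (f w). *)
Definition comp_lr (Sg : Type) (f g : seq Sg -> seq Sg) : seq Sg -> seq Sg :=
  fun w => g (f w).

Inductive generated (M : async_automaton)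
  : (seq (aa_Sigma M) -> seq (aa_Sigma M)) -> Prop :=
  | gen_state : forall q : aa_Q M, generated (state_map q)
  | gen_comp : forall f g, generated f -> generated g ->
      generated (comp_lr f g).

Definition is_async_automaton_semigroup (A : Type) (mul : A -> A -> A) : Prop :=
  exists (M : async_automaton)
         (phi : A -> seq (aa_Sigma M) -> seq (aa_Sigma M)),
    [/\ injective phi,
        (forall x y, phi (mul x y) = comp_lr (phi x) (phi y)),
        (forall x, generated (phi x)) &
        (forall f, generated f -> exists x, phi x = f)].

Definition associative_op (A : Type) (mul : A -> A -> A) : Prop :=
  forall x y z, mul x (mul y z) = mul (mul x y) z.

Definition normal_ideal_ext (S T : Type) (mulS : S -> S -> S) (mulT : T -> T -> T)
  (x y : S + T) : S + T :=
  match x, y with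
  | inl a, inl b => inl (mulS a b)
  | inr a, inr b => inr (mulT a b)
  | inl _, inr b => inr b
  | inr a, inl _ => inr a
  end.

From mathcomp Require Import all_boot.
From Stdlib Require Import FunctionalExtensionality.
Set Implicit Arguments. Unset Strict Implicit. Unset Printing Implicit Defensive.

(* Run automata for S and T side by side on the alphabet Sigma_S + Sigma_T + {#}
   (# is [None]).
   A state of S acts on the letters of Sigma_S as before and copies every other
   letter in place; a state of T acts on the letters of Sigma_T and deletes every
   other letter.  Then an S-map followed by a T-map, or a T-map followed by an
   S-map, is the T-map alone, which is the normal ideal extension; the letter #
   is fixed by S-maps and erased by T-maps, so the two kinds of maps never
   coincide.  The action of a composite of S-states on mixed words depends only
   on the map of Sigma_S-words it induces, since it is obtained by emitting, at
   each letter of Sigma_S, the new part of the image of the prefix read so far. *)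

Section StateMaps.
Variable M : async_automaton.
Local Notation Q := (aa_Q M).
Local Notation letter := (aa_Sigma M).

Definition reach (q : Q) (u : seq letter) : Q := foldl (@aa_t M) q u.

Lemma state_map_cat q u v :
  state_map q (u ++ v) = state_map q u ++ state_map (reach q u) v.
Proof. by elim: u q => //= x u IH q; rewrite IH catA. Qed.

Definition comp_states (ql : seq Q) (w : seq letter) : seq letter :=
  foldl (fun w q => state_map q w) w ql.

Lemma comp_states_cat ql pl :
  comp_states (ql ++ pl) = comp_lr (comp_states ql) (comp_states pl).
Proof. by apply: functional_extensionality => w; rewrite /comp_states foldl_cat. Qed.

Lemma comp_states_seq1 q : comp_states [:: q] = state_map q.
Proof. exact: functional_extensionality. Qed.

Lemma comp_states_nil ql : comp_states ql [::] = [::].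
Proof. by elim: ql. Qed.

Lemma generatedP (f : seq letter -> seq letter) :
  generated f <-> exists2 ql, ql != [::] & f = comp_states ql.
Proof.
split.
  elim=> [q | f1 f2 _ [ql nz_ql ->] _ [pl _ ->]]; first by exists [:: q]; rewrite ?comp_states_seq1.
  by exists (ql ++ pl); rewrite ?comp_states_cat //; case: ql nz_ql.
case=> ql + ->; elim: ql => // q [|p pl] IH _; first by rewrite comp_states_seq1; apply: gen_state.
by rewrite -cat1s comp_states_cat comp_states_seq1; apply: gen_comp (gen_state q) (IH isT).
Qed.

Lemma generated_nil (f : seq letter -> seq letter) : generated f -> f [::] = [::].
Proof. by case/generatedP=> ql _ ->; apply: comp_states_nil. Qed.

Fixpoint residual (ql : seq Q) (u : seq letter) : seq Q :=
  if ql is q :: ql' then reach q u :: residual ql' (state_map q u) else [::].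

Lemma residual_nil ql : residual ql [::] = ql.
Proof. by elim: ql => //= q ql ->. Qed.

Lemma residual_cat ql u v : residual ql (u ++ v) = residual (residual ql u) v.
Proof. by elim: ql u v => //= q ql IH u v; rewrite state_map_cat IH /reach foldl_cat. Qed.

Lemma comp_states_catr ql u v :
  comp_states ql (u ++ v) = comp_states ql u ++ comp_states (residual ql u) v.
Proof. by elim: ql u v => //= q ql IH u v; rewrite state_map_cat IH. Qed.

End StateMaps.

Section AutomatonMorphism.
Variables (M N : async_automaton).
Variables (hQ : aa_Q M -> aa_Q N) (hS : aa_Sigma M -> aa_Sigma N).
Hypothesis hQ_t : forall q x, aa_t (hQ q) (hS x) = hQ (aa_t q x).
Hypothesis hQ_o : forall q x, aa_o (hQ q) (hS x) = map hS (aa_o q x).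

Lemma reach_morph q u : reach (hQ q) (map hS u) = hQ (reach q u).
Proof. by elim: u q => //= x u IH q; rewrite hQ_t IH. Qed.

Lemma state_map_morph q u : state_map (hQ q) (map hS u) = map hS (state_map q u).
Proof. by elim: u q => //= x u IH q; rewrite hQ_o hQ_t IH map_cat. Qed.

Lemma comp_states_morph ql u :
  comp_states (map hQ ql) (map hS u) = map hS (comp_states ql u).
Proof. by elim: ql u => //= q ql IH u; rewrite state_map_morph IH. Qed.

Lemma residual_morph ql u :
  residual (map hQ ql) (map hS u) = map hQ (residual ql u).
Proof. by elim: ql u => //= q ql IH u; rewrite reach_morph state_map_morph IH. Qed.

End AutomatonMorphism.

Section IdealExtensionAutomaton.
Variables M1 M2 : async_automaton.
Local Notation Sigma1 := (aa_Sigma M1).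
Local Notation Sigma2 := (aa_Sigma M2).

Definition ext_t (q : (aa_Q M1 + aa_Q M2)%type) (c : option (Sigma1 + Sigma2)%type) :
    (aa_Q M1 + aa_Q M2)%type :=
  match q, c with
  | inl p, Some (inl x) => inl (aa_t p x)
  | inr p, Some (inr y) => inr (aa_t p y)
  | _, _ => q
  end.

Definition ext_o (q : (aa_Q M1 + aa_Q M2)%type) (c : option (Sigma1 + Sigma2)%type) :
    seq (option (Sigma1 + Sigma2)%type) :=
  match q, c with
  | inl p, Some (inl x) => map (fun z => Some (inl z)) (aa_o p x)
  | inl _, _ => [:: c]
  | inr p, Some (inr y) => map (fun z => Some (inr z)) (aa_o p y)
  | inr _, _ => [::]
  end.

Definition ideal_ext_automaton : async_automaton :=
  @AsyncAutomaton (aa_Q M1 + aa_Q M2)%type (option (Sigma1 + Sigma2)%type) ext_t ext_o.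

Local Notation E := ideal_ext_automaton.
Local Notation word := (seq (aa_Sigma E)).
Local Notation inlQ ql := (map inl ql : seq (aa_Q E)).

Definition embL (u : seq Sigma1) : word := map (fun x => Some (inl x)) u.
Definition embR (u : seq Sigma2) : word := map (fun y => Some (inr y)) u.

Fixpoint projR (w : word) : seq Sigma2 :=
  match w with
  | [::] => [::]
  | Some (inr y) :: w' => y :: projR w'
  | _ :: w' => projR w'
  end.

Lemma projR_cat u v : projR (u ++ v) = projR u ++ projR v.
Proof. by elim: u => //= [[[x|y]|]] u ->. Qed.

Lemma projR_embL u : projR (embL u) = [::].
Proof. by elim: u. Qed.

Lemma projR_embR u : projR (embR u) = u.
Proof. by elim: u => //= y u ->. Qed.

Lemma embR_inj : injective embR.
Proof. by apply: inj_map => x y []. Qed.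

Lemma embL_inj : injective embL.
Proof. by apply: inj_map => x y []. Qed.

(* [lift_from f p w]: the output on [w] once the Sigma1-word [p] has been read
   and [f p] already emitted. *)
Fixpoint lift_from (f : seq Sigma1 -> seq Sigma1) (p : seq Sigma1) (w : word) :
    word :=
  match w with
  | [::] => [::]
  | Some (inl x) :: w' =>
      embL (drop (size (f p)) (f (rcons p x))) ++ lift_from f (rcons p x) w'
  | c :: w' => c :: lift_from f p w'
  end.

Definition liftL f : word -> word := lift_from f [::].

Definition liftR (g : seq Sigma2 -> seq Sigma2) (w : word) : word := embR (g (projR w)).

Lemma comp_states_inl_embL ql u :
  comp_states (inlQ ql) (embL u) = embL (comp_states ql u).
Proof. exact: (@comp_states_morph M1 E inl). Qed.

Lemma residual_inl_embL ql u :
  residual (inlQ ql) (embL u) = inlQ (residual ql u).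
Proof. exact: (@residual_morph M1 E inl). Qed.

Lemma comp_states_inl_passive ql (c : aa_Sigma E) w :
  (if c is Some (inl _) then false else true) ->
  comp_states (inlQ ql) (c :: w) = c :: comp_states (inlQ ql) w.
Proof. by elim: ql w => //= q ql IH w; case: c IH => [[x|y]|] //= IH _; rewrite IH. Qed.

Lemma lift_from_comp_states ql p w :
  lift_from (comp_states ql) p w = comp_states (inlQ (residual ql p)) w.
Proof.
elim: w p => [|[[x|y]|] w IH] p /=; first by rewrite comp_states_nil.
- rewrite -[Some _ :: w]/(embL [:: x] ++ w) comp_states_catr comp_states_inl_embL.
  by rewrite residual_inl_embL -residual_cat -cats1 IH comp_states_catr drop_size_cat.
- by rewrite comp_states_inl_passive // IH.
- by rewrite comp_states_inl_passive // IH.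
Qed.

Lemma liftL_comp_states ql : liftL (comp_states ql) = comp_states (inlQ ql).
Proof.
by apply: functional_extensionality => w; rewrite /liftL lift_from_comp_states residual_nil.
Qed.

Lemma state_map_inl q : state_map (inl q : aa_Q E) = liftL (state_map q).
Proof. by rewrite -!comp_states_seq1 liftL_comp_states. Qed.

Lemma liftL_generated f : generated f -> generated (liftL f).
Proof.
case/generatedP=> ql nz_ql ->; rewrite liftL_comp_states; apply/generatedP.
by exists (map inl ql); first by case: ql nz_ql.
Qed.

Lemma liftL_comp f g : generated f -> generated g ->
  liftL (comp_lr f g) = comp_lr (liftL f) (liftL g).
Proof.
case/generatedP=> ql _ -> /generatedP[pl _ ->].
by rewrite -comp_states_cat !liftL_comp_states map_cat comp_states_cat.
Qed.

Lemma liftL_embL f u : generated f -> liftL f (embL u) = embL (f u).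
Proof. by case/generatedP=> ql _ ->; rewrite liftL_comp_states comp_states_inl_embL. Qed.

Lemma liftL_embR f u : liftL f (embR u) = embR u.
Proof. by rewrite /liftL; elim: u => //= y u ->. Qed.

Lemma projR_liftL f w : projR (liftL f w) = projR w.
Proof.
rewrite /liftL; elim: w [::] => //= [[[x|y]|]] w IH p //=; last by rewrite IH.
by rewrite projR_cat projR_embL IH.
Qed.

Lemma liftL_hash f : liftL f [:: None] = [:: None].
Proof. by []. Qed.

Lemma state_map_inr q : state_map (inr q : aa_Q E) = liftR (state_map q).
Proof.
apply: functional_extensionality => w; rewrite /liftR.
by elim: w q => //= [[[x|y]|]] w IH q //=; rewrite IH // -map_cat.
Qed.

Lemma liftR_comp g h : liftR (comp_lr g h) = comp_lr (liftR g) (liftR h).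
Proof. by apply: functional_extensionality => w; rewrite /comp_lr /liftR projR_embR. Qed.

Lemma liftR_generated g : generated g -> generated (liftR g).
Proof.
elim=> [q | g1 g2 _ gen1 _ gen2]; first by rewrite -state_map_inr; apply: gen_state.
by rewrite liftR_comp; apply: gen_comp.
Qed.

Lemma liftR_hash g : generated g -> liftR g [:: None] = [::].
Proof. by move/generated_nil; rewrite /liftR /= => ->. Qed.

Lemma liftR_inj : injective liftR.
Proof.
move=> g h e; apply: functional_extensionality => u; apply: embR_inj.
by have := congr1 (fun f => f (embR u)) e; rewrite /liftR projR_embR.
Qed.

End IdealExtensionAutomaton.

Section NormalIdealExtension.
Variables (M1 M2 : async_automaton) (S T : Type).
Variables (mulS : S -> S -> S) (mulT : T -> T -> T).
Variable phiS : S -> seq (aa_Sigma M1) -> seq (aa_Sigma M1).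
Variable phiT : T -> seq (aa_Sigma M2) -> seq (aa_Sigma M2).
Hypotheses (phiS_inj : injective phiS) (phiT_inj : injective phiT).
Hypothesis phiS_morph : forall a b, phiS (mulS a b) = comp_lr (phiS a) (phiS b).
Hypothesis phiT_morph : forall a b, phiT (mulT a b) = comp_lr (phiT a) (phiT b).
Hypothesis phiS_generated : forall a, generated (phiS a).
Hypothesis phiT_generated : forall b, generated (phiT b).
Hypothesis phiS_onto : forall f, generated f -> exists a, phiS a = f.
Hypothesis phiT_onto : forall g, generated g -> exists b, phiT b = g.

Definition ext_map (x : S + T) :
    seq (aa_Sigma (ideal_ext_automaton M1 M2)) -> seq (aa_Sigma (ideal_ext_automaton M1 M2)) :=
  match x with
  | inl a => liftL (phiS a)
  | inr b => liftR (phiT b)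
  end.

Lemma ext_map_morph x y :
  ext_map (normal_ideal_ext mulS mulT x y) = comp_lr (ext_map x) (ext_map y).
Proof.
case: x y => [a|b] [a'|b'] /=.
- by rewrite phiS_morph liftL_comp.
- by apply: functional_extensionality => w; rewrite /comp_lr /liftR projR_liftL.
- by apply: functional_extensionality => w; rewrite /comp_lr {2}/liftR liftL_embR.
- by rewrite phiT_morph liftR_comp.
Qed.

Lemma ext_map_inj : injective ext_map.
Proof.
move=> [a|b] [a'|b'] /= e.
- congr inl; apply: phiS_inj; apply: functional_extensionality => u; apply: (@embL_inj M1 M2).
  by rewrite -!liftL_embL // e.
- by have := congr1 (fun f => f [:: None]) e; rewrite liftL_hash liftR_hash.
- by have := congr1 (fun f => f [:: None]) e; rewrite liftL_hash liftR_hash.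
- by congr inr; apply: phiT_inj; apply: liftR_inj e.
Qed.

Lemma ext_map_generated x : generated (ext_map x).
Proof. by case: x => [a|b]; [apply: liftL_generated | apply: liftR_generated]. Qed.

Lemma ext_map_onto f : generated f -> exists x, ext_map x = f.
Proof.
elim=> [[q|q] | f1 f2 _ [x <-] _ [y <-]].
- by have [a ha] := phiS_onto (gen_state q); exists (inl a); rewrite /= ha state_map_inl.
- by have [b hb] := phiT_onto (gen_state q); exists (inr b); rewrite /= hb state_map_inr.
- by exists (normal_ideal_ext mulS mulT x y); apply: ext_map_morph.
Qed.

End NormalIdealExtension.

Theorem mainTheorem16 (S T : Type) (mulS : S -> S -> S) (mulT : T -> T -> T)
  (assocS : associative_op mulS) (assocT : associative_op mulT)
  (hS : is_async_automaton_semigroup mulS)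
  (hT : is_async_automaton_semigroup mulT) :
  is_async_automaton_semigroup (normal_ideal_ext mulS mulT).
Proof.
have [M1 [phiS [phiS_inj phiS_morph phiS_generated phiS_onto]]] := hS.
have [M2 [phiT [phiT_inj phiT_morph phiT_generated phiT_onto]]] := hT.
exists (ideal_ext_automaton M1 M2), (ext_map phiS phiT); split.
- exact: ext_map_inj.
- exact: ext_map_morph.
- exact: ext_map_generated.
- exact: ext_map_onto.
Qed.
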